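(* Let $\mathbf{X}\in\mathbb{R}^{N_X}$, $\mathbf{Y}\in\mathbb{R}^{N_Y}$ be zero-mean jointly Gaussian, and consider representations $\mathbf{T}_1=\mathbf{A}\mathbf{X}+\boldsymbol{\zeta}_1$, $\mathbf{T}_2=\mathbf{B}\mathbf{X}+\boldsymbol{\zeta}_2$, where $\boldsymbol{\zeta}_1\sim\mathcal N(0,\Sigma_{\zeta_1})$, $\boldsymbol{\zeta}_2\sim\mathcal N(0,\Sigma_{\zeta_2})$ are independent of each other and of $(\mathbf{X},\mathbf{Y})$. For given Lagrange parameters $(\beta,\lambda,\gamma)$ with $\beta,\lambda>0$, $\gamma\ge0$, the self-consistent equations for minimizing $\mathcal{F}=-I(\mathbf{Y};\mathbf{T}_1,\mathbf{T}_2)+\beta I(\mathbf{T}_1;\mathbf{X})+\lambda I(\mathbf{T}_2;\mathbf{X})+\gamma I(\mathbf{T}_1;\mathbf{T}_2)$, restricted to this Gaussian family, yield the following iterative procedure for $(\mathbf{A},\Sigma_{\zeta_1},\mathbf{B},\Sigma_{\zeta_2})$ at iteration $t$ (all quantities with superscript $(t)$ computed from $\mathbf{A}^{(t)},\Sigma_{\zeta_1}^{(t)},\mathbf{B}^{(t)},\Sigma_{\zeta_2}^{(t)}$ via the formulas in the context): $$\Sigma_{\zeta_1}^{-1\,(t+1)}=\Sigma_{T_1}^{-1\,(t)}-\frac{\gamma}{\beta}\Xi_1^{T(t)}\Sigma_{T_2|T_1}^{-1\,(t)}\Xi_1^{(t)}+\frac1\beta\Psi_1^{T(t)}\Sigma_{Y|T_1,T_2}^{-1\,(t)}\Psi_1^{(t)},$$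 $$\mathbf{A}^{(t+1)}=\Sigma_{\zeta_1}^{(t+1)}\Big[-\frac{\gamma}{\beta}\Xi_1^{T(t)}\Sigma_{T_2|T_1}^{-1\,(t)}\mathbf{B}^{(t)}+\frac1\beta\Psi_1^{T(t)}\Sigma_{Y|T_1,T_2}^{-1\,(t)}(\Theta-\Psi_2^{(t)}\mathbf{B}^{(t)})\Big],$$ $$\Sigma_{\zeta_2}^{-1\,(t+1)}=\Sigma_{T_2}^{-1\,(t)}-\frac{\gamma}{\lambda}\Xi_2^{T(t)}\Sigma_{T_1|T_2}^{-1\,(t)}\Xi_2^{(t)}+\frac1\lambda\Psi_2^{T(t)}\Sigma_{Y|T_1,T_2}^{-1\,(t)}\Psi_2^{(t)},$$ $$\mathbf{B}^{(t+1)}=\Sigma_{\zeta_2}^{(t+1)}\Big[-\frac{\gamma}{\lambda}\Xi_2^{T(t)}\Sigma_{T_1|T_2}^{-1\,(t)}\mathbf{A}^{(t+1)}+\frac1\lambda\Psi_2^{T(t)}\Sigma_{Y|T_1,T_2}^{-1\,(t)}(\Theta-\Psi_1^{(t)}\mathbf{A}^{(t+1)})\Big].$$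
   Context: Notation (all for current $\mathbf{A},\mathbf{B},\Sigma_{\zeta_1},\Sigma_{\zeta_2}$): $\Sigma_X$, $\Sigma_{YX}$ are the covariance and cross-covariance of $(\mathbf{X},\mathbf{Y})$; $\Theta=\Sigma_{YX}\Sigma_X^{-1}$; $\Sigma_{Y|X}$ is the conditional covariance of $\mathbf{Y}$ given $\mathbf{X}$. $\Sigma_{T_1}=\mathbf{A}\Sigma_X\mathbf{A}^T+\Sigma_{\zeta_1}$, $\Sigma_{T_2}=\mathbf{B}\Sigma_X\mathbf{B}^T+\Sigma_{\zeta_2}$. $\Sigma_{X|T_1}=(\Sigma_X^{-1}+\mathbf{A}^T\Sigma_{\zeta_1}^{-1}\mathbf{A})^{-1}$, $\Sigma_{X|T_2}=(\Sigma_X^{-1}+\mathbf{B}^T\Sigma_{\zeta_2}^{-1}\mathbf{B})^{-1}$, $\Sigma_{T_2|T_1}=\mathbf{B}\Sigma_{X|T_1}\mathbf{B}^T+\Sigma_{\zeta_2}$, $\Sigma_{T_1|T_2}=\mathbf{A}\Sigma_{X|T_2}\mathbf{A}^T+\Sigma_{\zeta_1}$. $\Xi_1=\mathbf{B}\Sigma_X\mathbf{A}^T\Sigma_{T_1}^{-1}$, $\Xi_2=\mathbf{A}\Sigma_X\mathbf{B}^T\Sigma_{T_2}^{-1}$. $\Psi_1=\Theta(\Sigma_X\mathbf{A}^T\Sigma_{T_1|T_2}^{-1}-\Sigma_X\mathbf{B}^T\Sigma_{T_2|T_1}^{-1}\mathbf{B}\Sigma_X\mathbf{A}^T\Sigma_{T_1}^{-1})$,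 $\Psi_2=\Theta(\Sigma_X\mathbf{B}^T\Sigma_{T_2|T_1}^{-1}-\Sigma_X\mathbf{A}^T\Sigma_{T_1|T_2}^{-1}\mathbf{A}\Sigma_X\mathbf{B}^T\Sigma_{T_2}^{-1})$. $\Sigma_{X|T_1,T_2}=\Sigma_X-\Sigma_X\mathbf{A}^T\Sigma_{T_1|T_2}^{-1}\mathbf{A}\Sigma_X+\Sigma_X\mathbf{A}^T\Sigma_{T_1|T_2}^{-1}\mathbf{A}\Sigma_X\mathbf{B}^T\Sigma_{T_2}^{-1}\mathbf{B}\Sigma_X+\Sigma_X\mathbf{B}^T\Sigma_{T_2|T_1}^{-1}\mathbf{B}\Sigma_X\mathbf{A}^T\Sigma_{T_1}^{-1}\mathbf{A}\Sigma_X-\Sigma_X\mathbf{B}^T\Sigma_{T_2|T_1}^{-1}\mathbf{B}\Sigma_X$, and $\Sigma_{Y|T_1,T_2}=\Theta\Sigma_{X|T_1,T_2}\Theta^T+\Sigma_{Y|X}$. The self-consistent equations referred to are: $p(t_1|x)\propto p(t_1)\exp\{\frac{\gamma}{\beta}D_{KL}[p(\mathbf{T}_2|x)\|p(\mathbf{T}_2|t_1)]-\frac1\beta\mathbb{E}_{\mathbf{T}_2|x}D_{KL}[p(\mathbf{Y}|x)\|p(\mathbf{Y}|t_1,\mathbf{T}_2)]\}$ and the symmetric one for $p(t_2|x)$ (with $\lambda$ in place of $\beta$), iterated by first updating $\mathbf{T}_1$ and then $\mathbf{T}_2$ using the updated $\mathbf{T}_1$. *)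

From mathcomp Require Import all_boot all_order all_algebra.
From mathcomp Require Import reals.
From mathcomp.analysis Require Import sequences exp trigo.
Set Implicit Arguments. Unset Strict Implicit. Unset Printing Implicit Defensive.
Import Order.TTheory GRing.Theory Num.Theory.
Local Open Scope ring_scope.

Section GaussDefs.
Context {R : realType}.

Definition quad (k : nat) (v : 'cV[R]_k) (M : 'M[R]_k) : R := (v^T *m M *m v) 0 0.

Definition posdef (k : nat) (M : 'M[R]_k) : Prop :=
  M^T = M /\ forall v : 'cV[R]_k, v != 0 -> 0 < quad v M.

Definition gauss_pdf (k : nat) (m : 'cV[R]_k) (S : 'M[R]_k) (t : 'cV[R]_k) : R :=
  expR (- (1 / 2) * quad (t - m) (invmx S)) / Num.sqrt ((2 * pi) ^+ k * \det S).

Definition gaussKL (k : nat) (m0 : 'cV[R]_k) (S0 : 'M[R]_k)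
    (m1 : 'cV[R]_k) (S1 : 'M[R]_k) : R :=
  (1 / 2) * (\tr (invmx S1 *m S0) + quad (m1 - m0) (invmx S1) - k%:R
             + ln (\det S1 / \det S0)).

(* E_{z ~ N(mu, Sg)} D_KL[ N(m0,S0) || N(a + M z, S1) ]
   (closed form of the Gaussian expectation of the quadratic in z) *)
Definition gaussKL_exp (k n : nat) (m0 : 'cV[R]_k) (S0 : 'M[R]_k)
    (a : 'cV[R]_k) (M : 'M[R]_(k, n)) (mu : 'cV[R]_n) (Sg : 'M[R]_n)
    (S1 : 'M[R]_k) : R :=
  gaussKL m0 S0 (a + M *m mu) S1 + (1 / 2) * \tr (invmx S1 *m M *m Sg *m M^T).

Variables (NX NY K1 K2 : nat).

(* All quantities below take the same argument list
   SX SYX SY A Sz1 B Sz2  (covariance of X, cross-covariance Sigma_{YX},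
   covariance of Y, encoder A, noise cov. Sigma_{zeta_1}, encoder B,
   noise cov. Sigma_{zeta_2}). *)
Definition Theta (SX : 'M[R]_NX) (SYX : 'M[R]_(NY, NX)) (SY : 'M[R]_NY) (A : 'M[R]_(K1, NX)) (Sz1 : 'M[R]_K1) (B : 'M[R]_(K2, NX)) (Sz2 : 'M[R]_K2) : 'M[R]_(NY, NX) := SYX *m invmx SX.
Definition SYgX (SX : 'M[R]_NX) (SYX : 'M[R]_(NY, NX)) (SY : 'M[R]_NY) (A : 'M[R]_(K1, NX)) (Sz1 : 'M[R]_K1) (B : 'M[R]_(K2, NX)) (Sz2 : 'M[R]_K2) : 'M[R]_NY := SY - SYX *m invmx SX *m SYX^T.
Definition ST1 (SX : 'M[R]_NX) (SYX : 'M[R]_(NY, NX)) (SY : 'M[R]_NY) (A : 'M[R]_(K1, NX)) (Sz1 : 'M[R]_K1) (B : 'M[R]_(K2, NX)) (Sz2 : 'M[R]_K2) : 'M[R]_K1 := A *m SX *m A^T + Sz1.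
Definition ST2 (SX : 'M[R]_NX) (SYX : 'M[R]_(NY, NX)) (SY : 'M[R]_NY) (A : 'M[R]_(K1, NX)) (Sz1 : 'M[R]_K1) (B : 'M[R]_(K2, NX)) (Sz2 : 'M[R]_K2) : 'M[R]_K2 := B *m SX *m B^T + Sz2.
Definition SXgT1 (SX : 'M[R]_NX) (SYX : 'M[R]_(NY, NX)) (SY : 'M[R]_NY) (A : 'M[R]_(K1, NX)) (Sz1 : 'M[R]_K1) (B : 'M[R]_(K2, NX)) (Sz2 : 'M[R]_K2) : 'M[R]_NX :=
  invmx (invmx SX + A^T *m invmx Sz1 *m A).
Definition SXgT2 (SX : 'M[R]_NX) (SYX : 'M[R]_(NY, NX)) (SY : 'M[R]_NY) (A : 'M[R]_(K1, NX)) (Sz1 : 'M[R]_K1) (B : 'M[R]_(K2, NX)) (Sz2 : 'M[R]_K2) : 'M[R]_NX :=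
  invmx (invmx SX + B^T *m invmx Sz2 *m B).
Definition ST2gT1 (SX : 'M[R]_NX) (SYX : 'M[R]_(NY, NX)) (SY : 'M[R]_NY) (A : 'M[R]_(K1, NX)) (Sz1 : 'M[R]_K1) (B : 'M[R]_(K2, NX)) (Sz2 : 'M[R]_K2) : 'M[R]_K2 :=
  B *m SXgT1 SX SYX SY A Sz1 B Sz2 *m B^T + Sz2.
Definition ST1gT2 (SX : 'M[R]_NX) (SYX : 'M[R]_(NY, NX)) (SY : 'M[R]_NY) (A : 'M[R]_(K1, NX)) (Sz1 : 'M[R]_K1) (B : 'M[R]_(K2, NX)) (Sz2 : 'M[R]_K2) : 'M[R]_K1 :=
  A *m SXgT2 SX SYX SY A Sz1 B Sz2 *m A^T + Sz1.
Definition Xi1 (SX : 'M[R]_NX) (SYX : 'M[R]_(NY, NX)) (SY : 'M[R]_NY) (A : 'M[R]_(K1, NX)) (Sz1 : 'M[R]_K1) (B : 'M[R]_(K2, NX)) (Sz2 : 'M[R]_K2) : 'M[R]_(K2, K1) :=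
  B *m SX *m A^T *m invmx (ST1 SX SYX SY A Sz1 B Sz2).
Definition Xi2 (SX : 'M[R]_NX) (SYX : 'M[R]_(NY, NX)) (SY : 'M[R]_NY) (A : 'M[R]_(K1, NX)) (Sz1 : 'M[R]_K1) (B : 'M[R]_(K2, NX)) (Sz2 : 'M[R]_K2) : 'M[R]_(K1, K2) :=
  A *m SX *m B^T *m invmx (ST2 SX SYX SY A Sz1 B Sz2).
Definition Psi1 (SX : 'M[R]_NX) (SYX : 'M[R]_(NY, NX)) (SY : 'M[R]_NY) (A : 'M[R]_(K1, NX)) (Sz1 : 'M[R]_K1) (B : 'M[R]_(K2, NX)) (Sz2 : 'M[R]_K2) : 'M[R]_(NY, K1) :=
  Theta SX SYX SY A Sz1 B Sz2 *m
   (SX *m A^T *m invmx (ST1gT2 SX SYX SY A Sz1 B Sz2)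
    - SX *m B^T *m invmx (ST2gT1 SX SYX SY A Sz1 B Sz2) *m B *m SX *m A^T
        *m invmx (ST1 SX SYX SY A Sz1 B Sz2)).
Definition Psi2 (SX : 'M[R]_NX) (SYX : 'M[R]_(NY, NX)) (SY : 'M[R]_NY) (A : 'M[R]_(K1, NX)) (Sz1 : 'M[R]_K1) (B : 'M[R]_(K2, NX)) (Sz2 : 'M[R]_K2) : 'M[R]_(NY, K2) :=
  Theta SX SYX SY A Sz1 B Sz2 *m
   (SX *m B^T *m invmx (ST2gT1 SX SYX SY A Sz1 B Sz2)
    - SX *m A^T *m invmx (ST1gT2 SX SYX SY A Sz1 B Sz2) *m A *m SX *m B^T
        *m invmx (ST2 SX SYX SY A Sz1 B Sz2)).
Definition SXgT12 (SX : 'M[R]_NX) (SYX : 'M[R]_(NY, NX)) (SY : 'M[R]_NY) (A : 'M[R]_(K1, NX)) (Sz1 : 'M[R]_K1) (B : 'M[R]_(K2, NX)) (Sz2 : 'M[R]_K2) : 'M[R]_NX :=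
  let S21 := ST2gT1 SX SYX SY A Sz1 B Sz2 in
  let S12 := ST1gT2 SX SYX SY A Sz1 B Sz2 in
  SX - SX *m A^T *m invmx S12 *m A *m SX
     + SX *m A^T *m invmx S12 *m A *m SX *m B^T
         *m invmx (ST2 SX SYX SY A Sz1 B Sz2) *m B *m SX
     + SX *m B^T *m invmx S21 *m B *m SX *m A^T
         *m invmx (ST1 SX SYX SY A Sz1 B Sz2) *m A *m SX
     - SX *m B^T *m invmx S21 *m B *m SX.
Definition SYgT12 (SX : 'M[R]_NX) (SYX : 'M[R]_(NY, NX)) (SY : 'M[R]_NY) (A : 'M[R]_(K1, NX)) (Sz1 : 'M[R]_K1) (B : 'M[R]_(K2, NX)) (Sz2 : 'M[R]_K2) : 'M[R]_NY :=
  Theta SX SYX SY A Sz1 B Sz2 *m SXgT12 SX SYX SY A Sz1 B Sz2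
    *m (Theta SX SYX SY A Sz1 B Sz2)^T + SYgX SX SYX SY A Sz1 B Sz2.

(* Right-hand side (unnormalised) of the self-consistent equation for
   p(t1|x), all distributions taken in the Gaussian family at the current
   parameters:
     p(t1)       = N(0, Sigma_{T1}),
     p(T2|x)     = N(B x, Sigma_{zeta_2}),
     p(T2|t1)    = N(Xi_1 t1, Sigma_{T2|T1}),
     p(Y|x)      = N(Theta x, Sigma_{Y|X}),
     p(Y|t1,t2)  = N(Psi_1 t1 + Psi_2 t2, Sigma_{Y|T1,T2}). *)
Definition sc_rhs1 (beta gamma : R) (SX : 'M[R]_NX) (SYX : 'M[R]_(NY, NX)) (SY : 'M[R]_NY) (A : 'M[R]_(K1, NX)) (Sz1 : 'M[R]_K1) (B : 'M[R]_(K2, NX)) (Sz2 : 'M[R]_K2)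
    (x : 'cV[R]_NX) (t1 : 'cV[R]_K1) : R :=
  gauss_pdf 0 (ST1 SX SYX SY A Sz1 B Sz2) t1 *
  expR (gamma / beta *
          gaussKL (B *m x) Sz2 (Xi1 SX SYX SY A Sz1 B Sz2 *m t1)
                  (ST2gT1 SX SYX SY A Sz1 B Sz2)
        - 1 / beta *
          gaussKL_exp (Theta SX SYX SY A Sz1 B Sz2 *m x) (SYgX SX SYX SY A Sz1 B Sz2)
            (Psi1 SX SYX SY A Sz1 B Sz2 *m t1) (Psi2 SX SYX SY A Sz1 B Sz2)
            (B *m x) Sz2 (SYgT12 SX SYX SY A Sz1 B Sz2)).

(* Right-hand side (unnormalised) of the self-consistent equation for
   p(t2|x), where T1 has already been updated, i.e. p(T1|x) = N(A1 x, Sz1new),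
   and the remaining distributions are those of the current parameters:
     p(t2) = N(0, Sigma_{T2}),  p(T1|t2) = N(Xi_2 t2, Sigma_{T1|T2}),
     p(Y|x) = N(Theta x, Sigma_{Y|X}),
     p(Y|t1,t2) = N(Psi_1 t1 + Psi_2 t2, Sigma_{Y|T1,T2}). *)
Definition sc_rhs2 (lambda gamma : R) (SX : 'M[R]_NX) (SYX : 'M[R]_(NY, NX)) (SY : 'M[R]_NY) (A : 'M[R]_(K1, NX)) (Sz1 : 'M[R]_K1) (B : 'M[R]_(K2, NX)) (Sz2 : 'M[R]_K2)
    (A1 : 'M[R]_(K1, NX)) (Sz1new : 'M[R]_K1)
    (x : 'cV[R]_NX) (t2 : 'cV[R]_K2) : R :=
  gauss_pdf 0 (ST2 SX SYX SY A Sz1 B Sz2) t2 *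
  expR (gamma / lambda *
          gaussKL (A1 *m x) Sz1new (Xi2 SX SYX SY A Sz1 B Sz2 *m t2)
                  (ST1gT2 SX SYX SY A Sz1 B Sz2)
        - 1 / lambda *
          gaussKL_exp (Theta SX SYX SY A Sz1 B Sz2 *m x) (SYgX SX SYX SY A Sz1 B Sz2)
            (Psi2 SX SYX SY A Sz1 B Sz2 *m t2) (Psi1 SX SYX SY A Sz1 B Sz2)
            (A1 *m x) Sz1new (SYgT12 SX SYX SY A Sz1 B Sz2)).

End GaussDefs.

From mathcomp Require Import all_boot all_order all_algebra.
From mathcomp Require Import reals.
From mathcomp.analysis Require Import sequences exp trigo.
From mathcomp Require Import ring lra.
Import Order.TTheory GRing.Theory Num.Theory.
Local Open Scope ring_scope.

Set Implicit Arguments. Unset Strict Implicit. Unset Printing Implicit Defensive.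

(* Each right-hand side of the self-consistent equations is a Gaussian density
   in t times the exponential of a function of t whose t-dependence lies only
   in the Mahalanobis terms of the two Kullback-Leibler divergences.
   Completing the square turns the product into a multiple of a Gaussian
   density whose precision and mean are exactly the updated Sigma_zeta^{-1}
   and A x (resp. B x).  This needs the matrices of those quadratic forms to
   be symmetric; for Sigma_{Y|T1,T2} symmetry rests on the identity
   Sigma_{T2}^{-1} C Sigma_{T1|T2}^{-1} = Sigma_{T2|T1}^{-1} C Sigma_{T1}^{-1},
   C = B Sigma_X A^T, between the Schur complements to which the Woodbury
   formula reduces the conditional covariances. *)

Section QuadraticForms.
Variable R : realType.

Definition bform m n (u : 'cV[R]_m) (M : 'M[R]_(m, n)) (w : 'cV[R]_n) : R :=
  (u^T *m M *m w) 0 0.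

Lemma quadE k (v : 'cV[R]_k) M : quad v M = bform v M v. Proof. by []. Qed.

Lemma bformDl m n (u1 u2 : 'cV[R]_m) M (w : 'cV[R]_n) :
  bform (u1 + u2) M w = bform u1 M w + bform u2 M w.
Proof. by rewrite /bform linearD /= !mulmxDl mxE. Qed.

Lemma bformDr m n (u : 'cV[R]_m) M (w1 w2 : 'cV[R]_n) :
  bform u M (w1 + w2) = bform u M w1 + bform u M w2.
Proof. by rewrite /bform mulmxDr mxE. Qed.

Lemma bformNl m n (u : 'cV[R]_m) M (w : 'cV[R]_n) : bform (- u) M w = - bform u M w.
Proof. by rewrite /bform linearN /= !mulNmx mxE. Qed.

Lemma bformNr m n (u : 'cV[R]_m) M (w : 'cV[R]_n) : bform u M (- w) = - bform u M w.
Proof. by rewrite /bform mulmxN mxE. Qed.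

Lemma bformZr m n (u : 'cV[R]_m) a M (w : 'cV[R]_n) :
  bform u M (a *: w) = a * bform u M w.
Proof. by rewrite /bform -scalemxAr mxE. Qed.

Lemma bform0l m n M (w : 'cV[R]_n) : bform (0 : 'cV[R]_m) M w = 0.
Proof. by rewrite /bform linear0 !mul0mx mxE. Qed.

Lemma bformDm m n (u : 'cV[R]_m) M1 M2 (w : 'cV[R]_n) :
  bform u (M1 + M2) w = bform u M1 w + bform u M2 w.
Proof. by rewrite /bform mulmxDr mulmxDl mxE. Qed.

Lemma bformNm m n (u : 'cV[R]_m) M (w : 'cV[R]_n) : bform u (- M) w = - bform u M w.
Proof. by rewrite /bform mulmxN mulNmx mxE. Qed.

Lemma bformZm m n (u : 'cV[R]_m) a M (w : 'cV[R]_n) :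
  bform u (a *: M) w = a * bform u M w.
Proof. by rewrite /bform -scalemxAr -scalemxAl mxE. Qed.

Lemma bform_mull m m' n (X : 'M[R]_(m', m)) (u : 'cV[R]_m) M (w : 'cV[R]_n) :
  bform (X *m u) M w = bform u (X^T *m M) w.
Proof. by rewrite /bform trmx_mul !mulmxA. Qed.

Lemma bform_mulr m n n' (u : 'cV[R]_m) M (Y : 'M[R]_(n, n')) (w : 'cV[R]_n') :
  bform u M (Y *m w) = bform u (M *m Y) w.
Proof. by rewrite /bform !mulmxA. Qed.

Lemma bform_tr m n (u : 'cV[R]_m) M (w : 'cV[R]_n) : bform u M w = bform w M^T u.
Proof.
by rewrite /bform -[in LHS](trmxK (u^T *m M *m w)) mxE !trmx_mul trmxK mulmxA.
Qed.

Lemma bform_sym n (u w : 'cV[R]_n) M : M^T = M -> bform u M w = bform w M u.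
Proof. by move=> sM; rewrite bform_tr sM. Qed.

Lemma quad0 k (M : 'M[R]_k) : quad 0 M = 0.
Proof. exact: bform0l. Qed.

Lemma quadD k (v : 'cV[R]_k) M1 M2 : quad v (M1 + M2) = quad v M1 + quad v M2.
Proof. exact: bformDm. Qed.

Lemma quadZ k (v : 'cV[R]_k) a M : quad v (a *: M) = a * quad v M.
Proof. exact: bformZm. Qed.

Lemma quad_mull k n (X : 'M[R]_(n, k)) (v : 'cV[R]_k) (M : 'M[R]_n) :
  quad (X *m v) M = quad v (X^T *m M *m X).
Proof. by rewrite !quadE bform_mull bform_mulr. Qed.

Lemma quad_complete_square k n1 n2 (Q Qn : 'M[R]_k) (X : 'M[R]_(n1, k))
    (M : 'M[R]_n1) (u : 'cV[R]_n1) (P : 'M[R]_(n2, k)) (N : 'M[R]_n2)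
    (w : 'cV[R]_n2) (m : 'cV[R]_k) (a b : R) :
  M^T = M -> N^T = N -> Qn^T = Qn ->
  Qn = Q - a *: (X^T *m M *m X) + b *: (P^T *m N *m P) ->
  Qn *m m = - a *: (X^T *m M *m u) + b *: (P^T *m N *m w) ->
  forall t, quad t Q - a * (quad (X *m t - u) M - quad (- u) M)
            + b * (quad (P *m t - w) N - quad (- w) N)
          = quad (t - m) Qn - quad (- m) Qn.
Proof.
move=> sM sN sQn defQn defm t.
rewrite !quadE !(bformDl, bformDr, bformNl, bformNr).
rewrite [bform u M _]bform_sym // [bform w N _]bform_sym // [bform m Qn t]bform_sym //.
have -> : bform t Qn m = - a * bform (X *m t) M u + b * bform (P *m t) N w.
  rewrite -[in bform t Qn m](mul1mx Qn) -bform_mulr defm.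
  by rewrite bformDr !bformZr -!mulmxA !bform_mulr !mul1mx !bform_mull.
have -> : bform t Qn t = bform t Q t - a * bform (X *m t) M (X *m t)
                         + b * bform (P *m t) N (P *m t).
  by rewrite {1}defQn !bformDm bformNm !bformZm !bform_mull !bform_mulr ?mulmxA.
ring.
Qed.

End QuadraticForms.

Section PositiveDefinite.
Variable R : realType.

Definition psd k (M : 'M[R]_k) : Prop := M^T = M /\ forall v, 0 <= quad v M.

Lemma quad1_gt0 k (v : 'cV[R]_k) : v != 0 -> 0 < quad v 1%:M.
Proof.
move=> v0; rewrite /quad mulmx1 mxE.
have sq_ge0 (j : 'I_k) : true -> 0 <= v^T 0 j * v j 0.
  by move=> _; rewrite mxE -expr2 sqr_ge0.
rewrite lt_def sumr_ge0 // andbT; apply/eqP => /(psumr_eq0P sq_ge0) vj0.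
move/eqP: v0; apply; apply/matrixP => i j; rewrite ord1 !mxE.
by have /eqP := vj0 i isT; rewrite mxE mulf_eq0 orbb => /eqP.
Qed.

Lemma posdef_unit k (M : 'M[R]_k) : posdef M -> M \in unitmx.
Proof.
move=> [_ pM]; rewrite unitmxE unitfE; apply/det0P => -[v v0 vM].
have : v^T != 0 by rewrite -(inj_eq (@trmx_inj _ _ _)) trmxK linear0.
by move/pM; rewrite /quad trmxK vM mul0mx mxE ltxx.
Qed.

Lemma posdef_inv k (M : 'M[R]_k) : posdef M -> posdef (invmx M).
Proof.
move=> pM; have uM := posdef_unit pM; case: pM => sM pM.
split; first by rewrite trmx_inv sM.
move=> v v0; rewrite -[v](mulKVmx uM) quad_mull sM mulmxV // mul1mx.
apply: pM; apply: contraNneq v0 => e.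
by rewrite -(mulKVmx uM v) e mulmx0.
Qed.

Lemma posdefDr k (M N : 'M[R]_k) : posdef M -> psd N -> posdef (M + N).
Proof.
move=> [sM pM] [sN pN]; split; first by rewrite linearD /= sM sN.
by move=> v v0; rewrite quadD; have := pM v v0; have := pN v; lra.
Qed.

Lemma posdefDl k (M N : 'M[R]_k) : psd M -> posdef N -> posdef (M + N).
Proof. by move=> pM pN; rewrite addrC; apply: posdefDr. Qed.

Lemma psd_conj k n (X : 'M[R]_(k, n)) (M : 'M[R]_n) : posdef M ->
  psd (X *m M *m X^T).
Proof.
move=> [sM pM]; split; first by rewrite !trmx_mul trmxK sM mulmxA.
move=> v; have -> : quad v (X *m M *m X^T) = quad (X^T *m v) M.
  by rewrite quad_mull trmxK.
have [->|v0] := eqVneq (X^T *m v) 0; first by rewrite quad0.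
exact/ltW/pM.
Qed.

Lemma psd_conjT k n (X : 'M[R]_(n, k)) (M : 'M[R]_n) : posdef M ->
  psd (X^T *m M *m X).
Proof. by move=> pM; have := psd_conj X^T pM; rewrite trmxK. Qed.

(* The determinant does not vanish along the segment from 1%:M to M, whose
   points are all positive definite, and equals 1 at 1%:M. *)
Lemma posdef_det_gt0 k (M : 'M[R]_k) : posdef M -> 0 < \det M.
Proof.
move=> pM; pose seg s : 'M[R]_k := (1 - s) *: 1%:M + s *: M.
pose p : {poly R} :=
  \det (\matrix_(i, j) (((1%:M : 'M[R]_k) i j)%:P * (1 - 'X) + (M i j)%:P * 'X)).
have pE s : p.[s] = \det (seg s).
  rewrite -horner_evalE -det_map_mx; congr (\det _).
  by apply/matrixP => i j; rewrite !mxE /= horner_evalE !hornerE mulrC [s * _]mulrC.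
have seg_posdef s : 0 <= s <= 1 -> posdef (seg s).
  case/andP => s0 s1; have [sM qM] := pM; split.
    by rewrite linearD !linearZ /= trmx1 sM.
  move=> v v0; rewrite quadD !quadZ.
  have q1 := quad1_gt0 v0; have qMv := qM _ v0.
  have [->|s_neq0] := eqVneq s 0; first by rewrite subr0 mul1r mul0r addr0.
  have s_gt0 : 0 < s by rewrite lt_def s_neq0 s0.
  by apply: ltr_wpDl; [apply: mulr_ge0; lra | apply: mulr_gt0].
have p_neq0 s : 0 <= s <= 1 -> p.[s] != 0.
  by move=> s01; rewrite pE -unitfE -unitmxE; apply/posdef_unit/seg_posdef.
have p0 : p.[0] = 1 by rewrite pE /seg subr0 scale1r scale0r addr0 det1.
have p1 : p.[1] = \det M by rewrite pE /seg subrr scale0r add0r scale1r.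
rewrite real_ltNge ?num_real //; apply/negP => detM_le0.
have [|s s01] := @poly_ivt _ (- p) 0 1 ler01.
  by rewrite !hornerN p0 p1 oppr_le0 ler01 oppr_ge0.
by rewrite /root hornerN oppr_eq0 (negPf (p_neq0 s s01)).
Qed.

Lemma gauss_norm_gt0 k (S : 'M[R]_k) : posdef S ->
  0 < Num.sqrt ((2 * pi) ^+ k * \det S).
Proof.
move=> pS; rewrite sqrtr_gt0 mulr_gt0 ?posdef_det_gt0 //.
by rewrite exprn_gt0 // mulr_gt0 ?pi_gt0.
Qed.

Lemma gauss_pdf_gt0 k (m : 'cV[R]_k) (S : 'M[R]_k) t : posdef S -> 0 < gauss_pdf m S t.
Proof. by move=> pS; rewrite /gauss_pdf divr_gt0 ?expR_gt0 ?gauss_norm_gt0. Qed.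

Lemma posdef_block_mx n1 n2 (S1 : 'M[R]_n1) (S21 : 'M[R]_(n2, n1)) S2 :
  posdef (block_mx S1 S21^T S21 S2) -> posdef S1 /\ S2^T = S2.
Proof.
move=> [sS pS]; move: sS; rewrite tr_block_mx trmxK => /eq_block_mx [sS1 _ _ sS2].
split => //; split => // v v0.
have := pS (col_mx v 0); rewrite col_mx_eq0 (negPf v0) => /(_ isT).
by rewrite /quad tr_col_mx mul_row_block mul_row_col trmx0 !mul0mx !addr0 mulmx0 addr0.
Qed.

End PositiveDefinite.

Section MatrixInversion.
Variable R : comUnitRingType.

Lemma invmx_woodbury n k (S : 'M[R]_n) (A : 'M[R]_(k, n)) (Z : 'M[R]_k) :
  S \in unitmx -> Z \in unitmx -> A *m S *m A^T + Z \in unitmx ->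
  invmx (invmx S + A^T *m invmx Z *m A)
  = S - S *m A^T *m invmx (A *m S *m A^T + Z) *m A *m S.
Proof.
move=> uS uZ uT; set T := A *m S *m A^T + Z; set W := S - _.
have SW : invmx S *m W = 1%:M - A^T *m invmx T *m A *m S.
  by rewrite /W mulmxBr !mulmxA mulVmx // !mul1mx.
have AZT : A^T *m invmx Z *m A *m S *m A^T = A^T *m invmx Z *m T - A^T.
  by rewrite /T mulmxDr -!mulmxA mulVmx // mulmx1 !mulmxA addrK.
have AZW : A^T *m invmx Z *m A *m W = A^T *m invmx T *m A *m S.
  rewrite /W mulmxBr !mulmxA AZT mulmxBl -[A^T *m invmx Z *m T *m invmx T]mulmxA.
  by rewrite mulmxV // mulmx1 !mulmxBl opprB addrC subrK.
have invW : (invmx S + A^T *m invmx Z *m A) *m W = 1%:M.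
  by rewrite mulmxDl SW AZW subrK.
have [uM _] := mulmx1_unit invW.
by rewrite -[RHS](mulKmx uM W) invW mulmx1.
Qed.

Lemma schur_complement_push n k (T1 : 'M[R]_n) (T2 : 'M[R]_k) (C : 'M[R]_(k, n)) :
  T1 \in unitmx -> T2 \in unitmx ->
  T2 - C *m invmx T1 *m C^T \in unitmx -> T1 - C^T *m invmx T2 *m C \in unitmx ->
  invmx T2 *m C *m invmx (T1 - C^T *m invmx T2 *m C)
  = invmx (T2 - C *m invmx T1 *m C^T) *m C *m invmx T1.
Proof.
move=> uT1 uT2 u21 u12.
have left : (T2 - C *m invmx T1 *m C^T) *m (invmx T2 *m C)
            = C - C *m invmx T1 *m C^T *m invmx T2 *m C.
  by rewrite mulmxBl mulmxA mulmxV // mul1mx !mulmxA.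
have right : C *m invmx T1 *m (T1 - C^T *m invmx T2 *m C)
             = C - C *m invmx T1 *m C^T *m invmx T2 *m C.
  by rewrite mulmxBr -[C *m invmx T1 *m T1]mulmxA mulVmx // mulmx1 !mulmxA.
rewrite -[LHS](mulKmx u21) [X in _ *m X]mulmxA left -right.
by rewrite mulmxK // !mulmxA.
Qed.

End MatrixInversion.

Section GaussianTilt.
Variable R : realType.

Lemma gauss_pdf_tilt k (S Qn : 'M[R]_k) (m : 'cV[R]_k) (g : 'cV[R]_k -> R) :
  posdef S -> posdef Qn ->
  (forall t, quad t (invmx S) - 2 * (g t - g 0) = quad (t - m) Qn - quad (- m) Qn) ->
  forall t, gauss_pdf 0 S t * expR (g t)
            = gauss_pdf 0 S 0 * expR (g 0) / gauss_pdf m (invmx Qn) 0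
              * gauss_pdf m (invmx Qn) t.
Proof.
move=> pS pQn exponentE t.
have D_gt0 := gauss_norm_gt0 pS; have Dn_gt0 := gauss_norm_gt0 (posdef_inv pQn).
rewrite /gauss_pdf invmxK !subr0 sub0r quad0.
have -> : -(1/2) * quad (t - m) Qn
          = (-(1/2) * quad t (invmx S) + g t) - g 0 + -(1/2) * quad (- m) Qn.
  by have := exponentE t; lra.
rewrite mulr0 expR0 !expRD expRN; field.
by rewrite !gt_eqF ?expR_gt0.
Qed.

Lemma sc_rhs_gauss_pdf nx ny k n (S : 'M[R]_k) (X : 'M[R]_(n, k))
    (C : 'M[R]_(n, nx)) (S0 S1 Sg : 'M[R]_n) (P : 'M[R]_(ny, k))
    (P' : 'M[R]_(ny, n)) (Th : 'M[R]_(ny, nx)) (S0' S2 : 'M[R]_ny) (a b : R) :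
  posdef S -> S1^T = S1 -> S2^T = S2 ->
  let Qn := invmx S - a *: (X^T *m invmx S1 *m X) + b *: (P^T *m invmx S2 *m P) in
  posdef Qn ->
  let C' := invmx Qn *m (- a *: (X^T *m invmx S1 *m C)
                         + b *: (P^T *m invmx S2 *m (Th - P' *m C))) in
  exists c : 'cV[R]_nx -> R, (forall x, 0 < c x) /\
    forall x t, gauss_pdf 0 S t
                * expR (a * gaussKL (C *m x) S0 (X *m t) S1
                        - b * gaussKL_exp (Th *m x) S0' (P *m t) P' (C *m x) Sg S2)
                = c x * gauss_pdf (C' *m x) (invmx Qn) t.
Proof.
move=> pS sS1 sS2 Qn pQn C'.
pose g x t := a * gaussKL (C *m x) S0 (X *m t) S1
              - b * gaussKL_exp (Th *m x) S0' (P *m t) P' (C *m x) Sg S2.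
exists (fun x => gauss_pdf 0 S 0 * expR (g x 0) / gauss_pdf (C' *m x) (invmx Qn) 0).
have pSn := posdef_inv pQn.
split=> [x|x].
  by rewrite divr_gt0 ?gauss_pdf_gt0 // mulr_gt0 ?expR_gt0 ?gauss_pdf_gt0.
apply: gauss_pdf_tilt => // t.
have sM : (invmx S1)^T = invmx S1 by rewrite trmx_inv sS1.
have sN : (invmx S2)^T = invmx S2 by rewrite trmx_inv sS2.
have meanE : Qn *m (C' *m x) = - a *: (X^T *m invmx S1 *m (C *m x))
    + b *: (P^T *m invmx S2 *m (Th *m x - P' *m (C *m x))).
  rewrite /C' mulmxA mulKVmx ?posdef_unit // mulmxDl -!scalemxAl.
  by rewrite -!mulmxA mulmxBl -!mulmxA.
have := quad_complete_square sM sN pQn.1 (erefl Qn) meanE t.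
have shiftE (v z w : 'cV[R]_ny) : w + v - z = w - (z - v) by rewrite opprB addrA.
by rewrite /g /gaussKL_exp /gaussKL !mulmx0 !shiftE !sub0r; lra.
Qed.

End GaussianTilt.

Section GaussianCovariances.
Variables (R : realType) (NX NY K1 K2 : nat).
Variables (SX : 'M[R]_NX) (SYX : 'M[R]_(NY, NX)) (SY : 'M[R]_NY).
Variables (A : 'M[R]_(K1, NX)) (Sz1 : 'M[R]_K1) (B : 'M[R]_(K2, NX)) (Sz2 : 'M[R]_K2).
Hypotheses (pX : posdef SX) (p1 : posdef Sz1) (p2 : posdef Sz2).

Local Notation T1 := (ST1 SX SYX SY A Sz1 B Sz2).
Local Notation T2 := (ST2 SX SYX SY A Sz1 B Sz2).
Local Notation T2gT1 := (ST2gT1 SX SYX SY A Sz1 B Sz2).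
Local Notation T1gT2 := (ST1gT2 SX SYX SY A Sz1 B Sz2).
Local Notation XgT12 := (SXgT12 SX SYX SY A Sz1 B Sz2).
Local Notation YgT12 := (SYgT12 SX SYX SY A Sz1 B Sz2).

Let sX : SX^T = SX. Proof. by case: pX. Qed.

Lemma posdef_ST1 : posdef T1.
Proof. exact/posdefDl/p1/psd_conj. Qed.

Lemma posdef_ST2 : posdef T2.
Proof. exact/posdefDl/p2/psd_conj. Qed.

Lemma posdef_ST2gT1 : posdef T2gT1.
Proof.
apply/posdefDl/p2/psd_conj/posdef_inv/posdefDr; first exact: posdef_inv.
exact/psd_conjT/posdef_inv.
Qed.

Lemma posdef_ST1gT2 : posdef T1gT2.
Proof.
apply/posdefDl/p1/psd_conj/posdef_inv/posdefDr; first exact: posdef_inv.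
exact/psd_conjT/posdef_inv.
Qed.

Let C := B *m SX *m A^T.

Let trC : C^T = A *m SX *m B^T.
Proof. by rewrite /C !trmx_mul trmxK sX mulmxA. Qed.

Lemma ST2gT1E : T2gT1 = T2 - C *m invmx T1 *m C^T.
Proof.
have uT1 : A *m SX *m A^T + Sz1 \in unitmx := posdef_unit posdef_ST1.
rewrite /ST2gT1 /SXgT1 (invmx_woodbury (posdef_unit pX) (posdef_unit p1) uT1).
by rewrite trC /ST2 mulmxBr mulmxBl addrAC /C !mulmxA.
Qed.

Lemma ST1gT2E : T1gT2 = T1 - C^T *m invmx T2 *m C.
Proof.
have uT2 : B *m SX *m B^T + Sz2 \in unitmx := posdef_unit posdef_ST2.
rewrite /ST1gT2 /SXgT2 (invmx_woodbury (posdef_unit pX) (posdef_unit p2) uT2).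
by rewrite trC /ST1 mulmxBr mulmxBl addrAC /C !mulmxA.
Qed.

Lemma SXgT12_sym : XgT12^T = XgT12.
Proof.
have symV (k : nat) (D : 'M[R]_(k, NX)) (M : 'M[R]_k) : M^T = M ->
    (SX *m D^T *m M *m D *m SX)^T = SX *m D^T *m M *m D *m SX.
  by move=> sM; rewrite !trmx_mul !trmxK sM sX !mulmxA.
have sT2 := (posdef_inv posdef_ST2).1.
have s21 := (posdef_inv posdef_ST2gT1).1; have s12 := (posdef_inv posdef_ST1gT2).1.
have push := schur_complement_push (C := C) (posdef_unit posdef_ST1) (posdef_unit posdef_ST2).
rewrite -ST2gT1E -ST1gT2E in push.
have cross : (SX *m A^T *m invmx T1gT2 *m A *m SX *m B^T
                *m invmx T2 *m B *m SX)^T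
           = SX *m B^T *m invmx T2gT1 *m B *m SX *m A^T
                *m invmx T1 *m A *m SX.
  rewrite !trmx_mul !trmxK sX s12 sT2.
  have := congr1 (fun M => SX *m B^T *m M *m A *m SX)
           (push (posdef_unit posdef_ST2gT1) (posdef_unit posdef_ST1gT2)).
  by rewrite /C !mulmxA.
rewrite /SXgT12 /= !linearD !linearN /= cross -{2}cross trmxK sX !symV //.
by rewrite [_ - _ + _ + _]addrAC.
Qed.

Lemma SYgT12_sym : SY^T = SY -> YgT12^T = YgT12.
Proof.
move=> sY; rewrite /SYgT12; move: XgT12 SXgT12_sym => S sS.
rewrite /SYgX /Theta linearD linearB /= !trmx_mul !trmxK sS sY trmx_inv sX.
by rewrite !mulmxA.
Qed.

End GaussianCovariances.

Theorem theorem2 (R : realType) (NX NY K1 K2 : nat)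
  (SX : 'M[R]_NX) (SYX : 'M[R]_(NY, NX)) (SY : 'M[R]_NY)
  (A : 'M[R]_(K1, NX)) (Sz1 : 'M[R]_K1) (B : 'M[R]_(K2, NX)) (Sz2 : 'M[R]_K2)
  (beta lambda gamma : R) :
  0 < beta -> 0 < lambda -> 0 <= gamma ->
  posdef (block_mx SX SYX^T SYX SY) ->
  posdef Sz1 -> posdef Sz2 ->
  let Th   := Theta  SX SYX SY A Sz1 B Sz2 in
  let iST1 := invmx (ST1 SX SYX SY A Sz1 B Sz2) in
  let iST2 := invmx (ST2 SX SYX SY A Sz1 B Sz2) in
  let iS21 := invmx (ST2gT1 SX SYX SY A Sz1 B Sz2) in
  let iS12 := invmx (ST1gT2 SX SYX SY A Sz1 B Sz2) in
  let X1   := Xi1  SX SYX SY A Sz1 B Sz2 in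
  let X2   := Xi2  SX SYX SY A Sz1 B Sz2 in
  let P1   := Psi1 SX SYX SY A Sz1 B Sz2 in
  let P2   := Psi2 SX SYX SY A Sz1 B Sz2 in
  let iSY  := invmx (SYgT12 SX SYX SY A Sz1 B Sz2) in
  (* Sigma_{zeta_1}^{-1 (t+1)} *)
  let iSz1' := iST1 - (gamma / beta) *: (X1^T *m iS21 *m X1)
               + (1 / beta) *: (P1^T *m iSY *m P1) in
  let Sz1' := invmx iSz1' in
  (* A^{(t+1)} *)
  let A' := Sz1' *m (- (gamma / beta) *: (X1^T *m iS21 *m B)
                     + (1 / beta) *: (P1^T *m iSY *m (Th - P2 *m B))) in
  (* Sigma_{zeta_2}^{-1 (t+1)} *)
  let iSz2' := iST2 - (gamma / lambda) *: (X2^T *m iS12 *m X2)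
               + (1 / lambda) *: (P2^T *m iSY *m P2) in
  let Sz2' := invmx iSz2' in
  (* B^{(t+1)} *)
  let B' := Sz2' *m (- (gamma / lambda) *: (X2^T *m iS12 *m A')
                     + (1 / lambda) *: (P2^T *m iSY *m (Th - P1 *m A'))) in
  posdef iSz1' -> posdef iSz2' ->
  (* the T1-update: p(t1|x) given by the self-consistent equation is
     N(A^{(t+1)} x, Sigma_{zeta_1}^{(t+1)}) *)
  (exists c1 : 'cV[R]_NX -> R, (forall x, 0 < c1 x) /\
     forall x t1, sc_rhs1 beta gamma SX SYX SY A Sz1 B Sz2 x t1
                  = c1 x * gauss_pdf (A' *m x) Sz1' t1) /\
  (* the T2-update, using the updated T1:
     p(t2|x) is N(B^{(t+1)} x, Sigma_{zeta_2}^{(t+1)}) *)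
  (exists c2 : 'cV[R]_NX -> R, (forall x, 0 < c2 x) /\
     forall x t2, sc_rhs2 lambda gamma SX SYX SY A Sz1 B Sz2 A' Sz1' x t2
                  = c2 x * gauss_pdf (B' *m x) Sz2' t2).
Proof.
move=> _ _ _ pXY p1 p2 *.
have [pX sY] := posdef_block_mx pXY.
have sSY := SYgT12_sym SYX A B pX p1 p2 sY.
split; apply: sc_rhs_gauss_pdf => //.
- exact: posdef_ST1.
- exact: (posdef_ST2gT1 SYX SY A B pX p1 p2).1.
- exact: posdef_ST2.
- exact: (posdef_ST1gT2 SYX SY A B pX p1 p2).1.
Qed.
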